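(* Let $n_r,n_q\ge 1$ and $N\ge 1$ be integers, let $M_r\in\mathbb{R}^{n_r\times n_r}$ and $M_q\in\mathbb{R}^{n_q\times n_q}$ be symmetric positive definite, let $G_r\in\mathbb{R}^{n_q\times n_r}$ be arbitrary (possibly singular), and let $\gamma_r\in\mathbb{R}^{n_r\times n_r}$, $\gamma_q\in\mathbb{R}^{n_q\times n_q}$ be stiffness coefficients (in particular, positive scalars). Let $r^{\mathrm{in}},s^{\mathrm{in}}\in\mathbb{R}^{n_r}$ and $q^{\mathrm{in}}_1,\dots,q^{\mathrm{in}}_N\in\mathbb{R}^{n_q}$. Suppose $(r(t),Q_1(t),\dots,Q_N(t))$ solves the ODE system $$\Big(M_r+\sum_{i=1}^N G_r^T M_q G_r\Big)\ddot r=-\gamma_r r+\sum_{i=1}^N G_r^T\gamma_q Q_i,\qquad \dot Q_j=-G_r\dot r\quad(j=1,\dots,N),$$ with $r(0)=r^{\mathrm{in}}$, $\dot r(0)=s^{\mathrm{in}}$, $Q_j(0)=q^{\mathrm{in}}_j$. Define $\mu^t:=\frac1N\sum_{j=1}^N\delta_{Q_j(t)}$. Then $(r(t),\mu^t)$ is a solution of the linear partially kinetic system (defined in the context) with $N_{\mathrm{real}}:=N$, initial conditions $r(0)=r^{\mathrm{in}}$, $\dot r(0)=s^{\mathrm{in}}$, and initial measure $\mu^{\mathrm{in}}=\frac1N\sum_{j=1}^N\delta_{q^{\mathrm{in}}_j}$.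
   Context: $\delta_x$ denotes the Dirac measure at $x$. $\mathcal P^1(\mathbb{R}^{n_q})$ is the set of Borel probability measures on $\mathbb{R}^{n_q}$ with finite first moment. For a measurable map $\varphi:\mathbb{R}^{n_q}\to\mathbb{R}^{n_q}$ and a measure $\mu$, the pushforward is $\varphi\#\mu(A):=\mu(\varphi^{-1}(A))$ for Borel sets $A$. Linear partially kinetic system: with $n_r,n_q,M_r,M_q,G_r,\gamma_r,\gamma_q$ as in the claim, a constant $N_{\mathrm{real}}>0$, initial data $r^{\mathrm{in}},s^{\mathrm{in}}\in\mathbb{R}^{n_r}$ and $\mu^{\mathrm{in}}\in\mathcal P^1(\mathbb{R}^{n_q})$, a solution consists of a twice differentiable $r:[0,\infty)\to\mathbb{R}^{n_r}$, a characteristic flow $Q:[0,\infty)\times\mathbb{R}^{n_q}\to\mathbb{R}^{n_q}$ differentiable in $t$, and measures $\mu^t$ such that $$\Big(M_r+N_{\mathrm{real}}\int_{\mathbb{R}^{n_q}}G_r^TM_qG_r\,d\mu^t(q)\Big)\ddot r(t)=-\gamma_r r(t)+N_{\mathrm{real}}G_r^T\gamma_q\int_{\mathbb{R}^{n_q}}q\,d\mu^t(q),$$ $$\partial_t Q(t,q^{\mathrm{in}})=-G_r\dot r(t),\quad Q(0,q^{\mathrm{in}})=q^{\mathrm{in}}\ \text{for all }q^{\mathrm{in}}\in\mathbb{R}^{n_q},\qquad \mu^t=Q(t,\cdot)\#\mu^{\mathrm{in}},$$ with $r(0)=r^{\mathrm{in}}$, $\dot r(0)=s^{\mathrm{in}}$.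 *)

From HB Require Import structures.
From mathcomp Require Import all_boot all_order all_algebra.
From mathcomp Require Import all_classical all_reals all_analysis.

Set Implicit Arguments.
Unset Strict Implicit.
Unset Printing Implicit Defensive.
Import Order.TTheory GRing.Theory Num.Theory.
Import numFieldNormedType.Exports.

Local Open Scope classical_set_scope.
Local Open Scope ring_scope.

(* R^n as column vectors, equipped with the Borel sigma-algebra
   (the sigma-algebra generated by the open sets of 'cV[R]_n). *)
Definition vec (R : realType) (n : nat) := g_sigma_algebraType (@open 'cV[R]_n).

(* Derivative on the time half-line [0, oo): for every t >= 0,
   the difference quotient (f (t+h) - f t)/h converges to f' t as h -> 0,
   h <> 0, t + h >= 0 (one-sided at t = 0, ordinary derivative for t > 0). *)
Definition deriv_on_nonneg (R : realType) (V : normedModType R)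
  (f f' : R -> V) : Prop :=
  forall t : R, 0 <= t ->
    (fun h : R => h^-1 *: (f (t + h) - f t)) @
      (within (fun h : R => 0 <= t + h) 0^') --> f' t.

Definition mx_integral (R : realType) (n m k : nat)
  (mu : set (vec R n) -> \bar R) (F : vec R n -> 'M[R]_(m, k)) : 'M[R]_(m, k) :=
  \matrix_(i, j) fine (\int[mu]_q (F q i j)%:E)%E.

(* Borel probability measures on R^n with finite first moment: P^1(R^n). *)
Definition is_P1 (R : realType) (n : nat) (mu : set (vec R n) -> \bar R) : Prop :=
  [/\ mu set0 = 0%E,
      (forall A, measurable A -> (0 <= mu A)%E),
      semi_sigma_additive mu,
      mu setT = 1%E &
      (\int[mu]_q (mx_norm (q : 'cV[R]_n))%:E < +oo)%E].

Definition empirical (R : realType) (n N : nat) (qs : 'I_N -> 'cV[R]_n) :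
  set (vec R n) -> \bar R :=
  fun A => ((N%:R)^-1%:E * \sum_(j < N) \d_(qs j : vec R n) A)%E.

Definition lpk_solution (R : realType) (nr nq : nat)
  (Mr : 'M[R]_nr) (Mq : 'M[R]_nq) (Gr : 'M[R]_(nq, nr))
  (gamr : 'M[R]_nr) (gamq : 'M[R]_nq) (Nreal : R)
  (rin sin : 'cV[R]_nr) (muin : set (vec R nq) -> \bar R)
  (r : R -> 'cV[R]_nr) (mu : R -> set (vec R nq) -> \bar R) : Prop :=
  is_P1 muin /\
  exists (s a : R -> 'cV[R]_nr) (Q : R -> vec R nq -> vec R nq),
    [/\ deriv_on_nonneg r s /\ deriv_on_nonneg s a,
        r 0 = rin /\ s 0 = sin,
        (forall t, 0 <= t ->
           (Mr + Nreal *: mx_integral (mu t) (fun _ => Gr^T *m Mq *m Gr)) *m a t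
           = - (gamr *m r t)
             + Nreal *: (Gr^T *m gamq *m mx_integral (mu t) (fun q => (q : 'cV[R]_nq)))),
        (forall q : vec R nq,
           deriv_on_nonneg (fun t => (Q t q : 'cV[R]_nq)) (fun t => - (Gr *m s t))
           /\ Q 0 q = q) &
        (forall t, 0 <= t -> mu t = pushforward muin (Q t))].

From HB Require Import structures.
From mathcomp Require Import all_boot all_order all_algebra.
From mathcomp Require Import all_classical all_reals all_analysis.
From mathcomp Require Import measurable_realfun lra.
Import Order.TTheory GRing.Theory Num.Theory.
Import numFieldNormedType.Exports.
Local Open Scope classical_set_scope.
Local Open Scope ring_scope.

(* All particles move with the same velocity -G_r r', so
   Q_j(t) = q_j^in - G_r (r(t) - r(0)): the difference of the two sides has
   zero derivative on [0, oo) and vanishes at 0.  Hence mu^t is the pushforward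
   of mu^in under this common translation, which is the characteristic flow of
   the kinetic system.  Integrals against (1/N) sum_j delta_(q_j) are averages,
   so the N-fold sums in the particle equation for r are N times the
   mu^t-integrals. *)

Lemma mulmx_colE {R : comPzRingType} m n (A : 'M[R]_(m, n)) (x : 'cV[R]_n) :
  A *m x = \sum_(k < n) x k 0 *: col k A.
Proof.
apply/matrixP => i j; rewrite mxE summxE; apply: eq_bigr => k _.
by rewrite !mxE (ord1 j) mulrC.
Qed.

Lemma mulmx_continuous {R : realType} {m n : nat} (A : 'M[R]_(m, n)) :
  continuous (fun x : 'cV[R]_n => A *m x).
Proof.
have -> : (fun x => A *m x) = fun x => \sum_(k < n) x k 0 *: col k A.
  by apply/funext => x; exact: mulmx_colE.
apply: continuous_big => [|k _ x]; first exact: add_continuous.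
apply: (@cvgZ R 'cV[R]_m _ (nbhs x) _ (fun y : 'cV[R]_n => y k 0) (fun _ => col k A)).
  exact: coord_continuous.
exact: cvg_cst.
Qed.

Section deriv_on_nonneg.
Context {R : realType}.

Lemma is_derive_quotient {V : normedModType R} (f : R -> V) x l :
  (fun h => h^-1 *: (f (x + h) - f x)) @ 0^' --> l -> is_derive x 1 f l.
Proof.
move=> fl.
have qE : (fun h : R => h^-1 *: ((f \o shift x) (h *: 1) - f x)) =
          (fun h => h^-1 *: (f (x + h) - f x)).
  by apply/funext => h /=; rewrite -[h%:A]/(h * 1) mulr1 (addrC h x).
apply: DeriveDef; first by rewrite /derivable qE; apply/cvg_ex; exists l.
by rewrite /derive qE; exact: cvg_lim.
Qed.

Lemma dnbhs_within_nonneg (t : R) : 0 < t ->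
  0^' `=>` within (fun h : R => 0 <= t + h) 0^'.
Proof.
move=> t0 A; apply: filterS2 (dnbhs0_lt (V := R) t0) => h ht Ah.
apply: Ah; rewrite -lerBlDl sub0r ltW //.
by move: ht; rewrite ltr_norml => /andP[].
Qed.

Lemma sqr_dnbhs0_within_nonneg :
  (fun h : R => h ^+ 2) @ 0^' `=>` within (fun h : R => 0 <= 0 + h) 0^'.
Proof.
move=> A A0; have A0' : nbhs (0 ^+ 2 : R) [set h | h != 0 -> 0 <= 0 + h -> A h].
  by rewrite expr0n.
have sqrA : nbhs (0 : R) [set h | h ^+ 2 != 0 -> 0 <= 0 + h ^+ 2 -> A (h ^+ 2)].
  exact: exprn_continuous A0'.
suff : nbhs (0 : R) [set h | h != 0 -> A (h ^+ 2)] by [].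
apply: filterS sqrA => h /= Ah h0.
by apply: Ah; rewrite ?sqrf_eq0 // add0r sqr_ge0.
Qed.

Lemma deriv_on_nonneg_is_derive {V : normedModType R} (f f' : R -> V) (t : R) :
  deriv_on_nonneg f f' -> 0 < t -> is_derive t 1 f (f' t).
Proof.
move=> df t0; apply: is_derive_quotient.
apply: cvg_trans (df t (ltW t0)); exact/cvg_app/dnbhs_within_nonneg.
Qed.

Lemma deriv_on_nonneg_sqr0 {V : normedModType R} (f f' : R -> V) :
  deriv_on_nonneg f f' -> is_derive (0 : R) 1 (f \o (fun x => x ^+ 2)) 0.
Proof.
move=> df; apply: is_derive_quotient.
pose q h := h^-1 *: (f (0 + h) - f 0).
have qsqr : (q \o (fun h => h ^+ 2)) @ 0^' --> f' 0.
  exact: cvg_comp sqr_dnbhs0_within_nonneg (df 0 (lexx 0)).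
have := cvgZ (@nbhs_dnbhs R 0) qsqr; rewrite scale0r => /(_ (dnbhs_filter 0)).
apply: cvg_trans; apply: near_eq_cvg; near=> h.
rewrite /q /= !add0r expr0n /= scalerA expr2 invfM mulrA mulfV ?mul1r //.
by near: h; exact: nbhs_dnbhs_neq.
Unshelve. all: by end_near. Qed.

Lemma deriv_on_nonneg0_cst (g : R -> R) :
  deriv_on_nonneg g (fun _ => 0) -> forall t, 0 <= t -> g t = g 0.
Proof.
move=> dg t t0.
(* Composing with x |-> x ^+ 2 turns the one-sided derivative at 0 into a
   two-sided one. *)
have dgsqr (x : R) : is_derive x 1 (g \o (fun y => y ^+ 2)) 0.
  have [->|x0] := eqVneq x 0; first exact: deriv_on_nonneg_sqr0 dg.
  have x2 : 0 < x ^+ 2 by rewrite exprn_even_gt0.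
  rewrite -(mul0r ('D_1 (fun y : R => y ^+ 2) x)).
  apply: is_derive1_comp; first exact: deriv_on_nonneg_is_derive dg x2.
  exact/derivableP/exprn_derivable.
have := is_derive_0_is_cst (Num.sqrt t) 0 dgsqr.
by rewrite /= sqr_sqrtr // expr0n.
Qed.

Lemma deriv_on_nonneg0_cst_mx m n (f : R -> 'M[R]_(m, n)) :
  deriv_on_nonneg f (fun _ => 0) -> forall t, 0 <= t -> f t = f 0.
Proof.
move=> df t t0; apply/matrixP => i j.
apply: (@deriv_on_nonneg0_cst (fun t => f t i j)) => // u u0.
have := cvg_comp _ _ (df u u0) (@coord_continuous R m n i j 0); rewrite mxE.
by apply: cvg_trans; apply: near_eq_cvg; apply: nearW => h /=; rewrite !mxE.
Qed.

Lemma deriv_on_nonneg_cst {V : normedModType R} (c : V) :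
  deriv_on_nonneg (fun _ => c) (fun _ => 0).
Proof.
move=> t _; have -> : (fun h : R => h^-1 *: (c - c)) = fun=> 0.
  by apply/funext => h; rewrite subrr scaler0.
exact: cvg_cst.
Qed.

Lemma deriv_on_nonnegB {V : normedModType R} {f g f' g' : R -> V} :
  deriv_on_nonneg f f' -> deriv_on_nonneg g g' ->
  deriv_on_nonneg (fun t => f t - g t) (fun t => f' t - g' t).
Proof.
move=> df dg t t0; apply: cvg_trans (cvgB (df t t0) (dg t t0)).
apply: near_eq_cvg; apply: nearW => h /=.
by rewrite !fctE -scalerBr !opprD !opprK addrACA.
Qed.

Lemma deriv_on_nonneg_mulmx {m n} (A : 'M[R]_(m, n)) {f f' : R -> 'cV[R]_n} :
  deriv_on_nonneg f f' ->
  deriv_on_nonneg (fun t => A *m f t) (fun t => A *m f' t).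
Proof.
move=> df t t0; have := cvg_comp _ _ (df t t0) (mulmx_continuous A (f' t)).
apply: cvg_trans; apply: near_eq_cvg; apply: nearW => h /=.
by rewrite -mulmxBr scalemxAr.
Qed.

Lemma deriv_on_nonneg_unique_mx {m n} {f g f' : R -> 'M[R]_(m, n)} :
  deriv_on_nonneg f f' -> deriv_on_nonneg g f' -> f 0 = g 0 ->
  forall t, 0 <= t -> f t = g t.
Proof.
move=> df dg fg0 t t0; apply/eqP; rewrite -subr_eq0; apply/eqP.
rewrite (@deriv_on_nonneg0_cst_mx _ _ (fun t => f t - g t)) ?fg0 ?subrr //.
have := deriv_on_nonnegB df dg; congr deriv_on_nonneg.
by apply/funext => u; rewrite subrr.
Qed.

End deriv_on_nonneg.

Lemma continuous_measurable_vec {R : realType} {n : nat} (f : 'cV[R]_n -> R) :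
  continuous f -> measurable_fun [set: vec R n] (f : vec R n -> R).
Proof.
move=> cf; apply: (measurability _ (RGenOpens.measurableE R)).
move=> _ [_ [a [b ->] <-]]; rewrite setTI.
by apply: sub_sigma_algebra; apply: (proj1 (continuousP f)) cf _ _; exact: interval_open.
Qed.

Section empirical.
Context {R : realType} {n N : nat} (qs : 'I_N -> 'cV[R]_n).

(* [msum] sums a [nat]-indexed family of measures; indices beyond [N] are
   never summed, so their value [0] is irrelevant. *)
Let qs_nat (k : nat) : vec R n := odflt 0 (omap qs (insub k)).

Let empirical_measure := mscale (N%:R^-1 : R)%:nng (msum (fun k => \d_(qs_nat k)) N).

Let empiricalE : empirical qs = empirical_measure.
Proof.
apply/funext => A; rewrite /empirical /empirical_measure /mscale /msum /=.
by congr (_ * _)%E; apply: eq_bigr => i _; rewrite /qs_nat valK.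
Qed.

Let ge0_integral_empirical (h : vec R n -> \bar R) :
  measurable_fun setT h -> (forall x, 0 <= h x)%E ->
  (\int[empirical_measure]_x h x = (N%:R^-1)%:E * \sum_(i < N) h (qs i))%E.
Proof.
move=> mh h0; rewrite ge0_integral_mscale //= ge0_integral_measure_sum //.
congr (_ * _)%E; apply: eq_bigr => i _.
by rewrite integral_dirac // diracT mul1e /qs_nat valK.
Qed.

Lemma integral_empirical (g : vec R n -> R) : measurable_fun setT g ->
  (\int[empirical qs]_x (g x)%:E = (N%:R^-1 * \sum_(i < N) g (qs i))%:E)%E.
Proof.
move=> mg; have mgE : measurable_fun setT (EFin \o g) by exact/measurable_EFinP.
have [mgp mgn] := (measurable_funepos mgE, measurable_funeneg mgE).
have [gp0 gn0] := (funepos_ge0 (EFin \o g), funeneg_ge0 (EFin \o g)).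
rewrite -[X in X = _]/(\int[empirical qs]_x (EFin \o g) x)%E.
rewrite empiricalE integralE !ge0_integral_empirical //.
under eq_bigr do rewrite funeposE -EFin_max.
under [X in (_ - _ * X)%E]eq_bigr do rewrite funenegE -EFinN -EFin_max.
rewrite !sumEFin -!EFinM -EFinB -mulrBr -sumrB; congr (_ * _)%:E.
by apply: eq_bigr => i _; rewrite !maxEle; case: lerP => ?; case: lerP => ?; lra.
Qed.

Lemma empirical_P1 : (0 < N)%N -> is_P1 (empirical qs).
Proof.
move=> N0; split.
- by rewrite empiricalE /empirical_measure measure0.
- by move=> A mA; rewrite empiricalE /empirical_measure measure_ge0.
- by rewrite empiricalE /empirical_measure; exact: measure_semi_sigma_additive.
- rewrite /empirical; under eq_bigr do rewrite diracT.
  by rewrite sumEFin sumr_const card_ord -EFinM mulVf // pnatr_eq0 -lt0n.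
- rewrite (integral_empirical (fun q : vec R n => mx_norm (q : 'cV[R]_n))) ?ltry //.
  by apply: continuous_measurable_vec; exact: norm_continuous.
Qed.

Lemma mx_integral_empirical m k (F : vec R n -> 'M[R]_(m, k)) :
  (forall i j, measurable_fun setT (fun q => F q i j)) ->
  mx_integral (empirical qs) F = N%:R^-1 *: \sum_(j < N) F (qs j).
Proof.
move=> mF; apply/matrixP => i j.
by rewrite !mxE integral_empirical //= summxE.
Qed.

(* [\d_a (f @^-1` A)] and [\d_(f a) A] are the same indicator value. *)
Lemma pushforward_empirical {n'} (f : vec R n -> vec R n') :
  pushforward (empirical qs) f = empirical (fun j => f (qs j) : 'cV[R]_n').
Proof. by []. Qed.

End empirical.

Theorem lemma1 (R : realType) (nr nq N : nat)
  (hnr : (0 < nr)%N) (hnq : (0 < nq)%N) (hN : (0 < N)%N)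
  (Mr : 'M[R]_nr) (Mq : 'M[R]_nq) (Gr : 'M[R]_(nq, nr))
  (hMr_sym : Mr^T = Mr)
  (hMr_pd : forall v : 'cV[R]_nr, v != 0 -> 0 < (v^T *m Mr *m v) 0 0)
  (hMq_sym : Mq^T = Mq)
  (hMq_pd : forall v : 'cV[R]_nq, v != 0 -> 0 < (v^T *m Mq *m v) 0 0)
  (gr gq : R) (hgr : 0 < gr) (hgq : 0 < gq)
  (rin sin : 'cV[R]_nr) (qin : 'I_N -> 'cV[R]_nq)
  (r s a : R -> 'cV[R]_nr) (Q : 'I_N -> R -> 'cV[R]_nq)
  (hr : deriv_on_nonneg r s) (hs : deriv_on_nonneg s a)
  (hQ : forall j, deriv_on_nonneg (Q j) (fun t => - (Gr *m s t)))
  (hode : forall t, 0 <= t ->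
     (Mr + \sum_(i < N) Gr^T *m Mq *m Gr) *m a t
     = - (gr%:M *m r t) + \sum_(i < N) Gr^T *m gq%:M *m Q i t)
  (hr0 : r 0 = rin) (hs0 : s 0 = sin) (hQ0 : forall j, Q j 0 = qin j) :
  lpk_solution Mr Mq Gr gr%:M gq%:M N%:R rin sin (empirical qin) r
    (fun t => empirical (fun j => Q j t)).
Proof.
pose flow t (q : vec R nq) : vec R nq := (q : 'cV_nq) - Gr *m (r t - r 0).
have dflow q : deriv_on_nonneg (fun t => flow t q) (fun t => - (Gr *m s t)).
  have := deriv_on_nonnegB (deriv_on_nonneg_cst (q : 'cV_nq))
    (deriv_on_nonneg_mulmx Gr (deriv_on_nonnegB hr (deriv_on_nonneg_cst (r 0)))).
  congr deriv_on_nonneg.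
  by apply/funext => t; rewrite subr0 sub0r.
have Q_flow j t : 0 <= t -> Q j t = flow t (qin j).
  apply: (deriv_on_nonneg_unique_mx (g := fun t => flow t (qin j)) (hQ j) (dflow _)).
  by rewrite hQ0 /flow subrr mulmx0 subr0.
have N0 : (N%:R : R) != 0 by rewrite pnatr_eq0 -lt0n.
split; first exact: empirical_P1.
exists s, a, flow; split => //.
- move=> t t0.
  rewrite [mx_integral _ (fun _ => _)]mx_integral_empirical => [|i j]; last first.
    exact: measurable_cst.
  rewrite mx_integral_empirical => [|i j]; last first.
    by apply: continuous_measurable_vec; exact: coord_continuous.
  by rewrite -scalemxAr !scalerA mulfV // !scale1r mulmx_sumr; exact: hode.
- by move=> q; split; last by rewrite /flow subrr mulmx0 subr0.
- move=> t t0; rewrite pushforward_empirical; congr empirical.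
  by apply/funext => j; rewrite Q_flow.
Qed.
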